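(* $\mathtt{Trellis}\subseteq\mathtt{incl}$-$\mathtt{ESO}$-$\mathtt{HORN}$.
   Context: Fix a finite alphabet $\Sigma$. A nonempty word $w=w_1\cdots w_n$ is represented by the structure $\langle w\rangle=([1,n];(Q_s)_{s\in\Sigma},\mathtt{min},\mathtt{max},\mathtt{suc},\mathtt{pred})$ with $Q_s(i)\iff w_i=s$, $\mathtt{min}(i)\iff i=1$, $\mathtt{max}(i)\iff i=n$, $\mathtt{suc}(i)=\min(i+1,n)$, $\mathtt{pred}(i)=\max(i-1,1)$. For an integer $a$, $x+a$ denotes $\mathtt{suc}^a(x)$ if $a\ge0$ and $\mathtt{pred}^{-a}(x)$ if $a<0$; $y-b=\mathtt{pred}^b(y)$. An inclusion Horn formula is $\Phi=\exists\mathbf{R}\forall x\forall y\,\psi(x,y)$, $\mathbf{R}$ a finite set of binary relation symbols, $\psi$ a conjunction of Horn clauses over $\{(Q_s)_{s\in\Sigma},\mathtt{min},\mathtt{max},\mathtt{suc},\mathtt{pred}\}\cup\mathbf{R}\cup\{=,\le,<\}$, each of the form $x\le y\wedge\delta_1\wedge\cdots\wedge\delta_r\to\delta_0$ with $\delta_0$ an atom $R(x,y)$ ($R\in\mathbf{R}$) or $\bot$, each $\delta_i$ one of: $U(x+a)$, $\neg U(x+a)$, $U(y+a)$, $\neg U(y+a)$ for $U\in\{(Q_s)_{s\in\Sigma},\mathtt{min},\mathtt{max}\}$, $a\in\mathbb Z$; $x=y$ or $x<y$; $S(x+a,y-b)\wedge x+a\le y-b$ with $S\in\mathbf{R}$,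 $a,b\ge0$. $\mathtt{incl}$-$\mathtt{ESO}$-$\mathtt{HORN}$ is the class of languages $\{w\in\Sigma^+:\langle w\rangle\models\Phi\}$. A one-way cellular automaton (OCA) is $(Q,\Sigma,Q_{accept},\{-1,0\},\delta)$ with finite $Q\supseteq\Sigma$, $Q_{accept}\subseteq Q$, $\delta:Q^2\to Q$; on input $w=w_1\cdots w_n$ it uses cells $1,\dots,n$ (cells outside permanently in a state $\sharp$), with $\langle c,1\rangle=w_c$ and $\langle c,t\rangle=\delta(\langle c-1,t-1\rangle,\langle c,t-1\rangle)$ for $t>1$. $\mathtt{Trellis}$ is the class of languages $L\subseteq\Sigma^+$ such that some OCA satisfies $w\in L\iff\langle n,n\rangle\in Q_{accept}$ for all $w$ of length $n$ (equivalently, languages accepted by trellis automata). *)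

From Stdlib Require List.
From mathcomp Require Import all_boot all_algebra.
Set Implicit Arguments. Unset Strict Implicit. Unset Printing Implicit Defensive.

Section InclHorn.
Variable Sigma : finType.

Definition sucp (n i : nat) : nat := minn i.+1 n.
Definition predp (i : nat) : nat := maxn i.-1 1.
Definition shift (n x : nat) (a : int) : nat :=
  match a with
  | Posz k => iter k (sucp n) x
  | Negz k => iter k.+1 predp x
  end.
Definition back (y b : nat) : nat := iter b predp y.

Definition allP (T : Type) (P : T -> Prop) (s : seq T) : Prop :=
  forall d, List.In d s -> P d.

Inductive upred := UQ of Sigma | UMin | UMax.
Inductive var := VarX | VarY.
Inductive atom (nR : nat) :=
  | AU of var & int & upred & bool   (* U(v+a) if true, ~U(v+a) if false *)
  | AEq
  | ALt
  | AS of 'I_nR & nat & nat.          (* S(x+a, y-b) /\ x+a <= y-b, a,b >= 0 *)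
(* clause: x <= y /\ body -> head, head = Some R for R(x,y), None for bottom *)
Record clause (nR : nat) := Clause { body : seq (atom nR); head : option 'I_nR }.
(* Phi = exists R_0..R_{nR-1} forall x forall y, conjunction of clauses *)
Record inclHorn := InclHorn { nrel : nat; clauses : seq (clause nrel) }.

Definition upred_holds (w : seq Sigma) (U : upred) (i : nat) : Prop :=
  match U with
  | UQ s => onth w i.-1 = Some s
  | UMin => i = 1
  | UMax => i = size w
  end.

Definition var_val (v : var) (x y : nat) : nat := if v is VarX then x else y.

Definition atom_holds nR (w : seq Sigma) (I : 'I_nR -> nat -> nat -> Prop)
    (x y : nat) (d : atom nR) : Prop :=
  match d with
  | AU v a U b =>
      let p := upred_holds w U (shift (size w) (var_val v x y) a) in
      if b then p else ~ p
  | AEq => x = y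
  | ALt => x < y
  | AS R a b =>
      I R (shift (size w) x (Posz a)) (back y b) /\
      shift (size w) x (Posz a) <= back y b
  end.

Definition head_holds nR (I : 'I_nR -> nat -> nat -> Prop) (x y : nat)
    (h : option 'I_nR) : Prop :=
  match h with Some R => I R x y | None => False end.

Definition clause_holds nR (w : seq Sigma) (I : 'I_nR -> nat -> nat -> Prop)
    (x y : nat) (c : clause nR) : Prop :=
  x <= y -> allP (atom_holds w I x y) (body c) -> head_holds I x y (head c).

Definition models (Phi : inclHorn) (w : seq Sigma) : Prop :=
  exists I : 'I_(nrel Phi) -> nat -> nat -> Prop,
    forall x y, 1 <= x <= size w -> 1 <= y <= size w ->
      allP (clause_holds w I x y) (clauses Phi).

Definition incl_ESO_HORN (L : seq Sigma -> Prop) : Prop :=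
  exists Phi : inclHorn, forall w, L w <-> (0 < size w /\ models Phi w).

Record OCA := MkOCA {
  Q : finType;
  inj : Sigma -> Q;          (* Q contains Sigma *)
  inj_inj : injective inj;
  acc : pred Q;
  sharp : Q;
  delta : Q -> Q -> Q }.

(* conf A w t c = <c, t+1>; cell 0 is permanently sharp *)
Fixpoint conf (A : OCA) (w : seq Sigma) (t c : nat) : Q A :=
  match t with
  | 0 => if c is 0 then sharp A
         else match onth w c.-1 with Some s => @inj A s | None => sharp A end
  | t'.+1 => if c is 0 then sharp A
             else @delta A (@conf A w t' c.-1) (@conf A w t' c)
  end.

Definition oca_accepts (A : OCA) (w : seq Sigma) : bool :=
  @acc A (conf A w (size w).-1 (size w)).

Definition Trellis (L : seq Sigma -> Prop) : Prop :=
  (forall w, L w -> 0 < size w) /\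
  exists A : OCA, forall w, 0 < size w -> (L w <-> oca_accepts A w).

End InclHorn.

From Pilot Require Import Defs.
From mathcomp Require Import all_boot all_algebra.
From Stdlib Require List.
From mathcomp Require Import zify.
From Stdlib Require Import Lia.

Set Implicit Arguments. Unset Strict Implicit. Unset Printing Implicit Defensive.

(* Let R_q(x, y) say that the trellis cell spanning the factor w_x ... w_y,
   i.e. cell y at time y - x, is in state q.  Horn clauses propagate these
   facts from the diagonal (x = y, read off the input) along the transition
   x < y, R_p(x, y - 1), R_q(x + 1, y) -> R_(delta p q)(x, y), and a goal
   clause forbids R_q(1, n) for rejecting q.  Every model of the propagation
   clauses contains the actual trellis computation (induction on y - x), and
   the computation itself is a model, so the formula holds exactly when the
   top cell <n, n> is accepting. *)

Lemma In_enum (T : finType) (x : T) : List.In x (enum T).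
Proof.
have : x \in enum T by rewrite mem_enum.
by elim: (enum T) => //= a s IH; rewrite in_cons => /orP[/eqP->|/IH]; [left|right].
Qed.

Lemma allP_cons (T : Type) (P : T -> Prop) d s :
  Defs.allP P (d :: s) <-> P d /\ Defs.allP P s.
Proof.
split=> [H | [Pd Ps] e [<- | /Ps //]] //.
by split=> [|e Ie]; apply: H; [left | right].
Qed.

Lemma predp_gt1 y : 1 < y -> predp y = y.-1.
Proof. by rewrite /predp; lia. Qed.

Lemma sucp_lt n x : x < n -> sucp n x = x.+1.
Proof. by rewrite /sucp; lia. Qed.

Section TrellisFormula.
Variables (Sigma : finType) (A : OCA Sigma).
Local Notation N := #|Q A|.

Definition cell (w : seq Sigma) (x y : nat) : Q A := conf A w (y - x) y.

Lemma cell_diag w x s : 0 < x -> onth w x.-1 = Some s -> cell w x x = inj A s.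
Proof. by rewrite /cell subnn; case: x => // x _ /= ->. Qed.

Lemma cell_step w x y : 0 < x < y ->
  cell w x y = delta (cell w x y.-1) (cell w x.+1 y).
Proof. by case: y => [|y] /andP[_ xy] //; rewrite /cell subSn. Qed.

Lemma oca_accepts_cell w : oca_accepts A w = acc (cell w 1 (size w)).
Proof. by rewrite /oca_accepts /cell subn1. Qed.

Definition base_cl (s : Sigma) : clause Sigma N :=
  Clause [:: AEq Sigma N; AU N VarX 0%R (UQ s) true] (Some (enum_rank (inj A s))).

Definition step_cl (p q : Q A) : clause Sigma N :=
  Clause [:: ALt Sigma N; AS Sigma (enum_rank p) 0 1; AS Sigma (enum_rank q) 1 0]
    (Some (enum_rank (delta p q))).

Definition reject_cl (q : Q A) : clause Sigma N :=
  Clause [:: AU N VarX 0%R (UMin Sigma) true; AU N VarY 0%R (UMax Sigma) true;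
             AS Sigma (enum_rank q) 0 0] None.

Definition trellis_clauses : seq (clause Sigma N) :=
  List.map base_cl (enum Sigma) ++
  List.map (fun pq => step_cl pq.1 pq.2) (List.list_prod (enum (Q A)) (enum (Q A))) ++
  List.map reject_cl (List.filter (fun q => ~~ acc q) (enum (Q A))).

Definition trellis_formula : inclHorn Sigma := InclHorn trellis_clauses.

Lemma In_trellis_clauses c :
  List.In c trellis_clauses <->
  [\/ exists s, c = base_cl s, exists p q, c = step_cl p q
    | exists2 q, ~~ acc q & c = reject_cl q].
Proof.
rewrite !List.in_app_iff !List.in_map_iff; split.
- case=> [[s [<- _]] | [[[p q] [<- _]] | [q [<- /List.filter_In[_ nq]]]]].
  + by apply: Or31; exists s.
  + by apply: Or32; exists p, q.
  + by apply: Or33; exists q.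
- case=> [[s ->] | [p [q ->]] | [q nq ->]].
  + by left; exists s; split=> //; exact: In_enum.
  + by right; left; exists (p, q); split=> //; apply: List.in_prod; exact: In_enum.
  + right; right; exists q; split=> //.
    by apply/List.filter_In; split=> //; exact: In_enum.
Qed.

Section ClauseSemantics.
Context {w : seq Sigma} {I : 'I_N -> nat -> nat -> Prop} {x y : nat}.

Lemma base_cl_holds {s} :
  clause_holds w I x y (base_cl s) <->
  (x = y -> onth w x.-1 = Some s -> I (enum_rank (inj A s)) x y).
Proof.
split=> H.
- move=> exy Hs; apply: H => [|d /= [<- | [<- | []]]] //; by rewrite exy.
- by move=> _ /allP_cons[/= exy /allP_cons[/= Hs _]]; apply: H.
Qed.

Lemma step_cl_holds {p q} : 0 < x -> y <= size w ->
  clause_holds w I x y (step_cl p q) <->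
  (x < y -> I (enum_rank p) x y.-1 -> I (enum_rank q) x.+1 y ->
   I (enum_rank (delta p q)) x y).
Proof.
move=> x0 yn.
have shiftsE : x < y -> predp y = y.-1 /\ sucp (size w) x = x.+1.
  by move=> xy; rewrite predp_gt1 ?sucp_lt //; lia.
split=> H.
- move=> xy Ip Iq; apply: H; first exact: ltnW.
  have [py sx] := shiftsE xy.
  by move=> d /= [<- | [<- | [<- | []]]] //=; rewrite ?py ?sx; split=> //; lia.
- move=> _ /allP_cons[/= xy /allP_cons[/= [Ip _] /allP_cons[/= [Iq _] _]]].
  have [py sx] := shiftsE xy.
  by move: Ip Iq; rewrite py sx; exact: H.
Qed.

Lemma reject_cl_holds {q} : 0 < size w ->
  clause_holds w I x y (reject_cl q) <->
  (x = 1 -> y = size w -> ~ I (enum_rank q) 1 (size w)).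
Proof.
move=> w0; split=> H.
- move=> ex ey Iq; rewrite ex ey in H.
  by apply: H => [|d /= [<- | [<- | [<- | []]]]].
- move=> _ /allP_cons[/= ex /allP_cons[/= ey /allP_cons[/= [Iq _] _]]].
  by move: Iq; rewrite ex ey; exact: H.
Qed.

End ClauseSemantics.

Lemma models_cell w I :
  (forall x y, 1 <= x <= size w -> 1 <= y <= size w ->
     Defs.allP (clause_holds w I x y) trellis_clauses) ->
  forall x y, 0 < x -> x <= y <= size w -> I (enum_rank (cell w x y)) x y.
Proof.
move=> HI x y; move Ek: (y - x) => k.
elim: k x y Ek => [|k IH] x y Ek x0 /andP[xy yn].
- have exy : x = y by lia.
  have xr : 0 < x <= size w by lia.
  subst y; case Es: (onth w x.-1) => [s|]; last first.
    have : x.-1 < size w by lia.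
    by rewrite -onthTE Es.
  have Hc : clause_holds w I x x (base_cl s).
    by apply: (HI _ _ xr xr); apply/In_trellis_clauses; apply: Or31; exists s.
  by move/base_cl_holds: Hc; rewrite (cell_diag x0 Es); apply.
- have xr : 0 < x <= size w by lia.
  have yr : 0 < y <= size w by lia.
  set p := cell w x y.-1; set q := cell w x.+1 y.
  have Hc : clause_holds w I x y (step_cl p q).
    by apply: (HI _ _ xr yr); apply/In_trellis_clauses; apply: Or32; exists p, q.
  rewrite cell_step; last lia.
  move/(step_cl_holds x0 yn): Hc; apply; first lia.
  - by apply: IH; lia.
  - by apply: IH; lia.
Qed.

Definition cell_interp w (q : 'I_N) (x y : nat) : Prop := cell w x y = enum_val q.

Lemma cell_interp_holds w x y :
  oca_accepts A w -> 1 <= x <= size w -> 1 <= y <= size w ->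
  Defs.allP (clause_holds w (cell_interp w) x y) trellis_clauses.
Proof.
rewrite oca_accepts_cell => Hacc /andP[x0 xn] /andP[_ yn] c.
case/In_trellis_clauses => [[s ->] | [p [q ->]] | [q nq ->]].
- apply/base_cl_holds => <- Hs.
  by rewrite /cell_interp enum_rankK (cell_diag x0 Hs).
- apply/(step_cl_holds x0 yn).
  by rewrite /cell_interp !enum_rankK => xy <- <-; apply: cell_step; rewrite x0.
- apply/(reject_cl_holds (leq_trans x0 xn)).
  by rewrite /cell_interp enum_rankK => _ _ Eq; move: Hacc nq; rewrite Eq => ->.
Qed.

Lemma models_trellis_formula w :
  0 < size w -> models trellis_formula w <-> oca_accepts A w.
Proof.
move=> w0; split=> [[I HI] | Hacc]; last first.
  by exists (cell_interp w) => x y; apply: cell_interp_holds.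
have nr : 0 < size w <= size w by rewrite w0 leqnn.
have top_cell := models_cell HI (ltn0Sn 0) nr.
rewrite oca_accepts_cell; apply/negPn/negP => nacc.
have /(reject_cl_holds w0) rejected :
    clause_holds w I 1 (size w) (reject_cl (cell w 1 (size w))).
  apply: (HI 1 (size w) w0 nr); apply/In_trellis_clauses.
  by apply: Or33; exists (cell w 1 (size w)).
exact: rejected erefl erefl top_cell.
Qed.

End TrellisFormula.

Theorem lemma9 (Sigma : finType) (L : seq Sigma -> Prop) :
  Trellis L -> incl_ESO_HORN L.
Proof.
move=> [Lpos [A HA]]; exists (trellis_formula A) => w.
split=> [Lw | [w0 Mw]].
- have w0 := Lpos _ Lw; split=> //.
  by apply/models_trellis_formula => //; apply/HA.
- by apply/HA => //; apply/models_trellis_formula.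
Qed.
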